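(* Let $q,r,p$ be integers with $1\le q\le p$ and $r\ge1$. Let $s_1,\dots,s_n$ be distinct integers and $w_1,\dots,w_n$ real weights such that $\sum_{i=1}^n w_i\,\frac{s_i^m}{m!} = \delta_{mq}$ for $m=0,1,\dots,q+r-1$ (an order-$r$ accurate stencil for the $q$-th derivative). Let $h\in(0,1]$, $\xi_k\in\mathbb{R}$, and let $I$ be a closed interval containing $\xi_k + h s_i$ for all $i$. Let $N=\max(p+1,q+r)$, let $x\in C^{q+r}(I)$ satisfy $|x^{(l)}(\xi)|\le M_l h^{1-l}$ on $I$ for $1\le l\le q+r$, and let $f\in C^{N}$ on a neighbourhood of $x(I)$ with $|f^{(j)}|\le B$ on $x(I)$ for $1\le j\le N$. Put $x_k=x(\xi_k)$ and $$F_p(x) = f(x) - \sum_{j=0}^{p}\frac{(x-x_k)^j}{j!}f^{(j)}(x_k),\qquad \tilde F_p = F_p\circ x.$$ Then there is a constant $K$ depending only on $p,q,r$, the $s_i$, the $w_i$, $M_1,\dots,M_{q+r}$ and $B$ (not on $h$) such that $$\Big|\,h^{-q}\sum_{i=1}^n w_i\,\tilde F_p(\xi_k+s_i h)\Big|\le K\,h^{p+1-q}.$$ In particular, with $p=r+q-1$ the bound is $K h^{r}$.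
   Context: The exact value of $\tilde F_p^{(q)}(\xi_k)$ is $0$ since $q\le p$; the quantity bounded is therefore the truncation error of the regular-grid stencil applied in the parameter $\xi$ (grid spacing $h$) to the auxiliary function $\tilde F_p$, whose derivatives of orders $1,\dots,p$ at $\xi_k$ all vanish. The hypothesis $x^{(l)}=O(h^{1-l})$ models a spline parametrisation of an irregular grid refined by knot insertion. *)

From Stdlib Require Import Reals ZArith Arith.
From Coquelicot Require Import Coquelicot.
Open Scope R_scope.

(* sumR n g = g 0 + g 1 + ... + g (n-1)  (indices i = 0..n-1 stand for 1..n) *)
Fixpoint sumR (n : nat) (g : nat -> R) : R :=
  match n with
  | O => 0
  | S k => sumR k g + g k
  end.

(* Derivative of g at t within the set D (one-sided at endpoints of an interval):
   the difference quotient tends to l as y -> t with y in D, y <> t. *)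
Definition is_derive_within (D : R -> Prop) (g : R -> R) (t l : R) : Prop :=
  filterlim (fun y => (g y - g t) / (y - t))
            (within (fun y => D y /\ y <> t) (locally t)) (locally l).

Definition continuous_within (D : R -> Prop) (g : R -> R) (t : R) : Prop :=
  filterlim g (within D (locally t)) (locally (g t)).

Definition Ck_on_within (k : nat) (D : R -> Prop) (g : R -> R) (dg : nat -> R -> R) : Prop :=
  (forall t, D t -> dg O t = g t) /\
  (forall l, (l < k)%nat -> forall t, D t -> is_derive_within D (dg l) t (dg (S l) t)) /\
  (forall t, D t -> continuous_within D (dg k) t).

Definition Ck_on_open (k : nat) (U : R -> Prop) (g : R -> R) (dg : nat -> R -> R) : Prop :=
  open U /\
  (forall y, U y -> dg O y = g y) /\
  (forall j, (j < k)%nat -> forall y, U y -> is_derive (dg j) y (dg (S j) y)) /\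
  (forall y, U y -> continuous (dg k) y).

(* The auxiliary function F_p is f minus its Taylor polynomial of
   degree p at x_k = x(xi_k), so Taylor's theorem (with the Lagrange-type
   bound obtained by iterating the mean value theorem) gives
       |F_p(y)| <= B |y - x_k|^(p+1)
   on every segment between x_k and a point of x(I), because the intermediate
   value theorem places such segments inside x(I), where the derivatives of f
   exist and are bounded by B.  Since |x'| <= M_1 on I, x is M_1-Lipschitz on I,
   so at the stencil point xi_k + s_i h we get |F~_p| <= B (M_1 |s_i| h)^(p+1).
   Summing with the weights and dividing by h^q gives the bound with
   K = sum_i |w_i| B (M_1 |s_i|)^(p+1). *)

From Stdlib Require Import Reals ZArith Arith Lra Lia.
From Coquelicot Require Import Coquelicot.
Open Scope R_scope.

Lemma ball_R : forall x e y : R, ball x e y <-> Rabs (y - x) < e.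
Proof.
  intros. unfold ball; simpl. unfold AbsRing_ball, abs, minus, plus, opp; simpl.
  tauto.
Qed.

Lemma sumR_abs : forall n g, Rabs (sumR n g) <= sumR n (fun i => Rabs (g i)).
Proof.
  induction n; intros g; simpl.
  - rewrite Rabs_R0; lra.
  - eapply Rle_trans; [apply Rabs_triang |]. specialize (IHn g). lra.
Qed.

Lemma sumR_le : forall n g g',
  (forall i, (i < n)%nat -> g i <= g' i) -> sumR n g <= sumR n g'.
Proof.
  induction n; intros g g' H; simpl; [lra |].
  assert (sumR n g <= sumR n g') by (apply IHn; intros; apply H; lia).
  assert (g n <= g' n) by (apply H; lia).
  lra.
Qed.

Lemma sumR_mulr : forall n g c, sumR n (fun i => g i * c) = sumR n g * c.
Proof. induction n; intros; simpl; [ring | rewrite IHn; ring]. Qed.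

(** * Taylor polynomials and the Taylor remainder bound *)

Definition taylor_poly (k : nat) (G : nat -> R -> R) (y0 z : R) : R :=
  sumR (S k) (fun j => (z - y0) ^ j / INR (fact j) * G j y0).

Lemma taylor_term_derive : forall k y0 c z,
  is_derive (fun z => (z - y0) ^ S k / INR (fact (S k)) * c) z
            ((z - y0) ^ k / INR (fact k) * c).
Proof.
  intros k y0 c z.
  assert (Hfact : INR (fact (S k)) = INR (S k) * INR (fact k))
    by (rewrite fact_simpl, mult_INR; reflexivity).
  assert (Hk : INR (fact k) <> 0) by (apply not_0_INR, fact_neq_0).
  assert (HSk : INR (S k) <> 0) by (apply not_0_INR; lia).
  rewrite Hfact.
  auto_derive; [split; auto |].
  change (match k with 0%nat => 1 | S _ => INR k + 1 end) with (INR (S k)).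
  change (z + - y0) with (z - y0). field. auto.
Qed.

Lemma taylor_poly_derive : forall k G y0 z,
  is_derive (taylor_poly (S k) G y0) z (taylor_poly k (fun j => G (S j)) y0 z).
Proof.
  unfold taylor_poly.
  induction k; intros G y0 z.
  - apply (is_derive_ext (fun z => G O y0 + z * G 1%nat y0 - y0 * G 1%nat y0)).
    + intros; simpl; field.
    + auto_derive; [auto | simpl; field].
  - apply (is_derive_plus
             (fun z => sumR (S (S k)) (fun j => (z - y0) ^ j / INR (fact j) * G j y0))
             (fun z => (z - y0) ^ S (S k) / INR (fact (S (S k))) * G (S (S k)) y0)).
    + apply IHk.
    + apply taylor_term_derive.
Qed.

Lemma taylor_poly_center : forall k G y0, taylor_poly k G y0 y0 = G O y0.
Proof.
  unfold taylor_poly.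
  induction k; intros G y0.
  - simpl; field.
  - change (sumR (S k) (fun j => (y0 - y0) ^ j / INR (fact j) * G j y0)
            + (y0 - y0) ^ S k / INR (fact (S k)) * G (S k) y0 = G O y0).
    rewrite IHk, Rminus_diag, pow_i by lia. unfold Rdiv; ring.
Qed.

Lemma mean_value_power_step : forall (phi phi' : R -> R) lo hi y0 C k,
  lo <= y0 <= hi -> 0 <= C ->
  (forall z, lo <= z <= hi -> is_derive phi z (phi' z)) ->
  phi y0 = 0 ->
  (forall z, lo <= z <= hi -> Rabs (phi' z) <= C * Rabs (z - y0) ^ k) ->
  forall y, lo <= y <= hi -> Rabs (phi y) <= C * Rabs (y - y0) ^ S k.
Proof.
  intros phi phi' lo hi y0 C k Hy0 HC Hd H0 Hb y Hy.
  assert (Hseg : forall z, Rmin y0 y <= z <= Rmax y0 y -> lo <= z <= hi)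
    by (intros z; unfold Rmin, Rmax; destruct (Rle_dec y0 y); lra).
  destruct (MVT_gen phi y0 y phi') as [c [Hc Heq]].
  - intros z Hz. apply Hd, Hseg. lra.
  - intros z Hz. apply derivable_continuous_pt. exists (phi' z).
    apply is_derive_Reals, Hd, Hseg, Hz.
  - assert (Hcy : Rabs (c - y0) <= Rabs (y - y0))
      by (unfold Rmin, Rmax in Hc; destruct (Rle_dec y0 y); split_Rabs; lra).
    rewrite H0, Rminus_0_r in Heq. rewrite Heq, Rabs_mult. simpl.
    assert (Hpow : Rabs (c - y0) ^ k <= Rabs (y - y0) ^ k)
      by (apply pow_incr; split; [apply Rabs_pos | exact Hcy]).
    assert (Hphi' : Rabs (phi' c) <= C * Rabs (y - y0) ^ k).
    { eapply Rle_trans; [apply Hb, Hseg; exact Hc |].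
      apply Rmult_le_compat_l; auto. }
    rewrite (Rmult_comm (Rabs (y - y0))), <- Rmult_assoc.
    apply Rmult_le_compat_r; [apply Rabs_pos | exact Hphi'].
Qed.

Lemma taylor_remainder_bound : forall k (G : nat -> R -> R) lo hi y0 B,
  lo <= y0 <= hi -> 0 <= B ->
  (forall j, (j <= k)%nat -> forall z, lo <= z <= hi -> is_derive (G j) z (G (S j) z)) ->
  (forall z, lo <= z <= hi -> Rabs (G (S k) z) <= B) ->
  forall y, lo <= y <= hi ->
  Rabs (G O y - taylor_poly k G y0 y) <= B * Rabs (y - y0) ^ S k.
Proof.
  induction k; intros G lo hi y0 B Hy0 HB Hd Hb.
  - apply (mean_value_power_step _ (G 1%nat)); auto.
    + intros z Hz. apply (is_derive_ext (fun z => G O z - G O y0)).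
      * intros; unfold taylor_poly; simpl; field.
      * replace (G 1%nat z) with (G 1%nat z - 0) by ring.
        apply (is_derive_minus (G O) (fun _ => G O y0)); [apply Hd; auto | auto_derive; auto].
    + rewrite taylor_poly_center; ring.
    + intros z Hz. simpl. rewrite Rmult_1_r. auto.
  - apply (mean_value_power_step _
             (fun y => G 1%nat y - taylor_poly k (fun j => G (S j)) y0 y)); auto.
    + intros z Hz. apply (is_derive_minus (G O) (taylor_poly (S k) G y0));
        [apply Hd; auto; lia |].
      apply taylor_poly_derive.
    + rewrite taylor_poly_center; ring.
    + intros z Hz. apply (IHk (fun j => G (S j)) lo hi); auto.
      intros j Hj z' Hz'. apply Hd; auto; lia.
Qed.

(** * Functions with bounded one-sided derivatives on a closed interval *)

Lemma derive_within_approx : forall (D : R -> Prop) g t l (eps : posreal),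
  is_derive_within D g t l ->
  exists d : posreal, forall y, Rabs (y - t) < d -> D y -> y <> t ->
    Rabs ((g y - g t) / (y - t) - l) < eps.
Proof.
  intros D g t l eps H.
  apply filterlim_locally with (eps := eps) in H.
  destruct H as [d Hd]. exists d. intros y Hy HD Hne.
  specialize (Hd y). rewrite ball_R in Hd. specialize (Hd Hy (conj HD Hne)).
  rewrite ball_R in Hd. exact Hd.
Qed.

Lemma derive_within_interior : forall a b g t l,
  a < t < b -> is_derive_within (fun t => a <= t <= b) g t l ->
  derivable_pt_lim g t l.
Proof.
  intros a b g t l Ht H eps Heps.
  destruct (derive_within_approx _ g t l (mkposreal eps Heps) H) as [d Hd].
  assert (Hpos : 0 < Rmin d (Rmin (t - a) (b - t)))
    by (apply Rmin_pos; [apply cond_pos | apply Rmin_pos; lra]).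
  exists (mkposreal _ Hpos). intros hh Hh0 Hh. simpl in Hh.
  pose proof (Rmin_l d (Rmin (t - a) (b - t))).
  pose proof (Rmin_r d (Rmin (t - a) (b - t))).
  pose proof (Rmin_l (t - a) (b - t)).
  pose proof (Rmin_r (t - a) (b - t)).
  specialize (Hd (t + hh)). replace (t + hh - t) with hh in Hd by ring.
  apply Hd; [lra | split_Rabs; lra | lra].
Qed.

Lemma derive_within_local_lipschitz : forall (D : R -> Prop) g t l,
  is_derive_within D g t l ->
  exists d : posreal, forall y, Rabs (y - t) < d -> D y ->
    Rabs (g y - g t) <= (Rabs l + 1) * Rabs (y - t).
Proof.
  intros D g t l H.
  destruct (derive_within_approx D g t l (mkposreal 1 Rlt_0_1) H) as [d Hd].
  exists d. intros y Hy HD.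
  destruct (Req_dec y t) as [E | E].
  - subst. rewrite !Rminus_diag, Rabs_R0. lra.
  - specialize (Hd y Hy HD E). simpl in Hd.
    replace (g y - g t) with ((g y - g t) / (y - t) * (y - t)) by (field; lra).
    rewrite Rabs_mult. apply Rmult_le_compat_r; [apply Rabs_pos |].
    pose proof (Rabs_triang_inv ((g y - g t) / (y - t)) l). lra.
Qed.

Lemma lipschitz_interior : forall a b (g g' : R -> R) L,
  (forall t, a <= t <= b -> is_derive_within (fun t => a <= t <= b) g t (g' t)) ->
  (forall t, a <= t <= b -> Rabs (g' t) <= L) ->
  forall c d, a < c -> c < d -> d < b -> Rabs (g d - g c) <= L * (d - c).
Proof.
  intros a b g g' L Hd Hb c d Hc Hcd Hdb.
  destruct (MVT_cor2 g g' c d Hcd) as [z [Hz Hzi]].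
  - intros z Hz. apply (derive_within_interior a b); [lra | apply Hd; lra].
  - rewrite Hz, Rabs_mult, (Rabs_right (d - c)) by lra.
    apply Rmult_le_compat_r; [lra | apply Hb; lra].
Qed.

Lemma le_of_le_plus_small : forall A C K r0, 0 < r0 -> 0 <= K ->
  (forall rho, 0 < rho < r0 -> A <= C + K * rho) -> A <= C.
Proof.
  intros A C K r0 Hr0 HK H. apply Rle_plus_epsilon. intros eps Heps.
  set (rho := Rmin (r0 / 2) (eps / (K + 1))).
  assert (H1 : rho <= eps / (K + 1)) by apply Rmin_r.
  assert (Hrho : 0 < rho < r0).
  { assert (rho <= r0 / 2) by apply Rmin_l.
    split; [apply Rmin_pos; [lra | apply Rdiv_lt_0_compat; lra] | lra]. }
  assert (HKr : K * rho <= eps).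
  { apply Rle_trans with ((K + 1) * rho); [nra |].
    apply Rmult_le_compat_l with (r := K + 1) in H1; [| lra].
    replace ((K + 1) * (eps / (K + 1))) with eps in H1 by (field; lra). exact H1. }
  specialize (H rho Hrho). lra.
Qed.

(* Lipschitz estimate for u < v in [a, b]: compare g on [u + rho, v - rho]
   (interior estimate) and near the endpoints (local Lipschitz bounds), then let
   the gap rho shrink to 0. *)
Lemma lipschitz_ordered : forall a b (g g' : R -> R) L,
  (forall t, a <= t <= b -> is_derive_within (fun t => a <= t <= b) g t (g' t)) ->
  (forall t, a <= t <= b -> Rabs (g' t) <= L) ->
  forall u v, a <= u <= b -> a <= v <= b -> u < v ->
  Rabs (g v - g u) <= L * (v - u).
Proof.
  intros a b g g' L Hd Hb u v Hu Hv Huv.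
  destruct (derive_within_local_lipschitz _ g u (g' u) (Hd u Hu)) as [du Hdu].
  destruct (derive_within_local_lipschitz _ g v (g' v) (Hd v Hv)) as [dv Hdv].
  set (Lu := Rabs (g' u) + 1). set (Lv := Rabs (g' v) + 1).
  pose proof (Rabs_pos (g' u)). pose proof (Rabs_pos (g' v)).
  pose proof (cond_pos du). pose proof (cond_pos dv).
  apply (le_of_le_plus_small _ _ (Lu + Lv) (Rmin ((v - u) / 3) (Rmin du dv)));
    [apply Rmin_pos; [lra | apply Rmin_pos; lra] | unfold Lu, Lv; lra |].
  intros rho [Hrho Hrho'].
  pose proof (Rmin_l ((v - u) / 3) (Rmin du dv)).
  pose proof (Rmin_r ((v - u) / 3) (Rmin du dv)).
  pose proof (Rmin_l du dv). pose proof (Rmin_r du dv).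
  assert (Hleft : Rabs (g (u + rho) - g u) <= Lu * rho).
  { replace rho with (Rabs (u + rho - u)) at 2 by (rewrite Rabs_right; lra).
    apply Hdu; [rewrite Rabs_right; lra | lra]. }
  assert (Hright : Rabs (g (v - rho) - g v) <= Lv * rho).
  { replace rho with (Rabs (v - rho - v)) at 2 by (rewrite Rabs_left; lra).
    apply Hdv; [rewrite Rabs_left; lra | lra]. }
  assert (Hmid : Rabs (g (v - rho) - g (u + rho)) <= L * (v - u - 2 * rho)).
  { replace (v - u - 2 * rho) with (v - rho - (u + rho)) by ring.
    apply (lipschitz_interior a b g g'); auto; lra. }
  assert (HL : 0 <= L) by (eapply Rle_trans; [apply Rabs_pos | apply (Hb u Hu)]).
  replace (g v - g u) with
    (- (g (v - rho) - g v) + (g (v - rho) - g (u + rho)) + (g (u + rho) - g u)) by ring.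
  pose proof (Rabs_triang (- (g (v - rho) - g v) + (g (v - rho) - g (u + rho)))
                          (g (u + rho) - g u)).
  pose proof (Rabs_triang (- (g (v - rho) - g v)) (g (v - rho) - g (u + rho))).
  rewrite Rabs_Ropp in *. nra.
Qed.

Lemma lipschitz_of_bounded_derivative : forall a b (g g' : R -> R) L,
  (forall t, a <= t <= b -> is_derive_within (fun t => a <= t <= b) g t (g' t)) ->
  (forall t, a <= t <= b -> Rabs (g' t) <= L) ->
  forall u v, a <= u <= b -> a <= v <= b -> Rabs (g v - g u) <= L * Rabs (v - u).
Proof.
  intros a b g g' L Hd Hb u v Hu Hv.
  destruct (Rtotal_order u v) as [H | [H | H]].
  - rewrite (Rabs_right (v - u)) by lra. apply (lipschitz_ordered a b g g'); auto.
  - subst. rewrite !Rminus_diag, Rabs_R0. lra.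
  - rewrite Rabs_minus_sym, (Rabs_left (v - u)) by lra.
    replace (- (v - u)) with (u - v) by ring. apply (lipschitz_ordered a b g g'); auto.
Qed.

(** * The intermediate value property on a closed interval *)

Definition clamp (a b u : R) : R := Rmax a (Rmin b u).

Lemma clamp_in : forall a b u, a <= b -> a <= clamp a b u <= b.
Proof. intros. unfold clamp, Rmax, Rmin. repeat destruct (Rle_dec _ _); lra. Qed.

Lemma clamp_id : forall a b u, a <= u <= b -> clamp a b u = u.
Proof. intros. unfold clamp, Rmax, Rmin. repeat destruct (Rle_dec _ _); lra. Qed.

Lemma clamp_nonexpansive : forall a b u v, a <= b ->
  Rabs (clamp a b u - clamp a b v) <= Rabs (u - v).
Proof.
  intros. unfold clamp, Rmax, Rmin. repeat destruct (Rle_dec _ _); split_Rabs; lra.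
Qed.

Lemma lipschitz_continuity : forall (g : R -> R) L, 0 <= L ->
  (forall u v, Rabs (g v - g u) <= L * Rabs (v - u)) -> continuity g.
Proof.
  intros g L HL Hl x0. apply continuity_pt_locally. intros eps.
  assert (Hp : 0 < eps / (L + 1)) by (apply Rdiv_lt_0_compat; [apply cond_pos | lra]).
  exists (mkposreal _ Hp). intros y Hy. rewrite ball_R in Hy. simpl in Hy.
  apply Rle_lt_trans with ((L + 1) * Rabs (y - x0)).
  - eapply Rle_trans; [apply Hl |].
    apply Rmult_le_compat_r; [apply Rabs_pos | lra].
  - apply Rmult_lt_compat_l with (r := L + 1) in Hy; [| lra].
    replace ((L + 1) * (eps / (L + 1))) with (pos eps) in Hy by (field; lra).
    exact Hy.
Qed.

(* A Lipschitz function on [a, b] attains every value between two of its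
   values: apply the intermediate value theorem to g composed with clamp. *)
Lemma lipschitz_intermediate_value : forall a b (g : R -> R) L, a <= b -> 0 <= L ->
  (forall u v, a <= u <= b -> a <= v <= b -> Rabs (g v - g u) <= L * Rabs (v - u)) ->
  forall t1 t2 z, a <= t1 <= b -> a <= t2 <= b ->
  Rmin (g t1) (g t2) <= z <= Rmax (g t1) (g t2) ->
  exists tau, a <= tau <= b /\ g tau = z.
Proof.
  intros a b g L Hab HL Hl t1 t2 z H1 H2 Hz.
  set (gc := fun u => g (clamp a b u)).
  assert (Hc : continuity gc).
  { apply (lipschitz_continuity gc L HL). intros u v. unfold gc.
    eapply Rle_trans; [apply Hl; apply clamp_in; exact Hab |].
    apply Rmult_le_compat_l; [exact HL | apply clamp_nonexpansive, Hab]. }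
  assert (E1 : gc t1 = g t1) by (unfold gc; rewrite clamp_id; auto).
  assert (E2 : gc t2 = g t2) by (unfold gc; rewrite clamp_id; auto).
  rewrite <- E1, <- E2 in Hz.
  destruct (IVT_gen gc t1 t2 z Hc Hz) as [tau [Ht Hgt]].
  assert (Htin : a <= tau <= b)
    by (unfold Rmin, Rmax in Ht; destruct (Rle_dec t1 t2); lra).
  exists tau. split; [exact Htin |]. unfold gc in Hgt. rewrite clamp_id in Hgt; auto.
Qed.

(* The segment between x t0 and x t lies in x([a, b]) by the intermediate value
   property, so the one-variable Taylor bound applies on it. *)
Lemma composite_taylor_bound : forall k a b (x : R -> R) (df : nat -> R -> R) L B t0,
  a <= b -> 0 <= L -> 0 <= B -> a <= t0 <= b ->
  (forall u v, a <= u <= b -> a <= v <= b -> Rabs (x v - x u) <= L * Rabs (v - u)) ->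
  (forall j, (j <= k)%nat -> forall t, a <= t <= b ->
     is_derive (df j) (x t) (df (S j) (x t))) ->
  (forall t, a <= t <= b -> Rabs (df (S k) (x t)) <= B) ->
  forall t, a <= t <= b ->
  Rabs (df O (x t) - taylor_poly k df (x t0) (x t)) <= B * Rabs (x t - x t0) ^ S k.
Proof.
  intros k a b x df L B t0 Hab HL HB Ht0 Hlip Hd Hb t Ht.
  assert (Hseg : forall z, Rmin (x t0) (x t) <= z <= Rmax (x t0) (x t) ->
                   exists tau, a <= tau <= b /\ x tau = z)
    by (intros; apply (lipschitz_intermediate_value a b x L Hab HL Hlip t0 t); auto).
  apply (taylor_remainder_bound k df (Rmin (x t0) (x t)) (Rmax (x t0) (x t)));
    [split; [apply Rmin_l | apply Rmax_l] | exact HB | | |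
     split; [apply Rmin_r | apply Rmax_r]].
  - intros j Hj z Hz. destruct (Hseg z Hz) as [tau [Htau <-]]. auto.
  - intros z Hz. destruct (Hseg z Hz) as [tau [Htau <-]]. auto.
Qed.

Lemma stencil_sum_bound : forall n q p (w g C : nat -> R) h,
  0 < h -> (q <= p + 1)%nat ->
  (forall i, (i < n)%nat -> Rabs (g i) <= C i * h ^ (p + 1)) ->
  Rabs (/ h ^ q * sumR n (fun i => w i * g i))
    <= sumR n (fun i => Rabs (w i) * C i) * h ^ (p + 1 - q).
Proof.
  intros n q p w g C h Hh Hqp Hg.
  assert (Hhq : 0 < h ^ q) by (apply pow_lt; lra).
  assert (Hsplit : h ^ (p + 1) = h ^ (p + 1 - q) * h ^ q)
    by (rewrite <- pow_add; f_equal; lia).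
  rewrite Rabs_mult, Rabs_right by (apply Rle_ge, Rlt_le, Rinv_0_lt_compat, Hhq).
  apply Rle_trans with (/ h ^ q * (sumR n (fun i => Rabs (w i) * C i) * h ^ (p + 1))).
  - apply Rmult_le_compat_l; [apply Rlt_le, Rinv_0_lt_compat, Hhq |].
    rewrite <- sumR_mulr.
    eapply Rle_trans; [apply sumR_abs | apply sumR_le].
    intros i Hi. rewrite Rabs_mult, Rmult_assoc.
    apply Rmult_le_compat_l; [apply Rabs_pos | auto].
  - rewrite Hsplit. right. field. lra.
Qed.

Theorem mainTheorem4 :
  forall (q r p n : nat) (s : nat -> Z) (w : nat -> R) (M : nat -> R) (B : R),
    (1 <= q)%nat -> (q <= p)%nat -> (1 <= r)%nat ->
    (forall i j, (i < n)%nat -> (j < n)%nat -> i <> j -> s i <> s j) ->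
    (forall m, (m < q + r)%nat ->
       sumR n (fun i => w i * IZR (s i) ^ m / INR (fact m))
       = if Nat.eqb m q then 1 else 0) ->
    exists K : R,
      forall (h xi a b : R) (x f : R -> R) (dx df : nat -> R -> R) (U : R -> Prop),
        0 < h -> h <= 1 -> a <= b -> a <= xi <= b ->
        (forall i, (i < n)%nat -> a <= xi + h * IZR (s i) <= b) ->
        Ck_on_within (q + r) (fun t => a <= t <= b) x dx ->
        (forall l, (1 <= l <= q + r)%nat -> forall t, a <= t <= b ->
           Rabs (dx l t) <= M l * powerRZ h (1 - Z.of_nat l)) ->
        (forall t, a <= t <= b -> U (x t)) ->
        Ck_on_open (Nat.max (p + 1) (q + r)) U f df ->
        (forall j, (1 <= j <= Nat.max (p + 1) (q + r))%nat -> forall t, a <= t <= b ->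
           Rabs (df j (x t)) <= B) ->
        let Ft := fun t => f (x t) - sumR (p + 1)
                     (fun j => (x t - x xi) ^ j / INR (fact j) * df j (x xi)) in
        Rabs (/ h ^ q * sumR n (fun i => w i * Ft (xi + IZR (s i) * h)))
          <= K * h ^ (p + 1 - q).
Proof.
  intros q r p n s w M B Hq Hqp Hr _ _.
  exists (sumR n (fun i => Rabs (w i) * (B * (M 1%nat * Rabs (IZR (s i))) ^ (p + 1)))).
  intros h xi a b x f dx df U Hh0 Hh1 Hab Hxi Hpts [Hx0 [Hxd _]] HM HU
    [_ [Hf0 [Hfd _]]] HB Ft.
  assert (HM1 : forall t, a <= t <= b -> Rabs (dx 1%nat t) <= M 1%nat)
    by (intros t Ht; pose proof (HM 1%nat ltac:(lia) t Ht) as H; simpl in H; lra).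
  assert (HM1pos : 0 <= M 1%nat) by (eapply Rle_trans; [apply Rabs_pos | apply (HM1 a); lra]).
  assert (HBpos : 0 <= B)
    by (eapply Rle_trans; [apply Rabs_pos | apply (HB 1%nat ltac:(lia) a); lra]).
  assert (Hlip : forall u v, a <= u <= b -> a <= v <= b ->
                   Rabs (x v - x u) <= M 1%nat * Rabs (v - u)).
  { intros u v Hu Hv. rewrite <- (Hx0 u Hu), <- (Hx0 v Hv).
    apply (lipschitz_of_bounded_derivative a b _ (dx 1%nat)); auto.
    intros t Ht. apply Hxd; auto; lia. }
  assert (Hpoint : forall t, a <= t <= b -> Rabs (Ft t) <= B * Rabs (x t - x xi) ^ (p + 1)).
  { intros t Ht. unfold Ft. rewrite <- (Hf0 _ (HU t Ht)), Nat.add_1_r.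
    apply (composite_taylor_bound p a b x df (M 1%nat)); auto.
    - intros j Hj t' Ht'. apply Hfd; auto; lia.
    - intros t' Ht'. apply HB; auto; lia. }
  apply stencil_sum_bound; [exact Hh0 | lia |].
  intros i Hi.
  assert (Hti : a <= xi + IZR (s i) * h <= b) by (rewrite Rmult_comm; auto).
  eapply Rle_trans; [apply Hpoint, Hti |].
  rewrite Rmult_assoc, <- Rpow_mult_distr. apply Rmult_le_compat_l; [exact HBpos |].
  apply pow_incr. split; [apply Rabs_pos |].
  eapply Rle_trans; [apply Hlip; auto |].
  replace (xi + IZR (s i) * h - xi) with (IZR (s i) * h) by ring.
  rewrite Rabs_mult, (Rabs_right h) by lra. lra.
Qed.
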